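(* Min-Sum CMP can be solved in $\mathcal{O}(1)$ time for two robots.
   Context: Robots are axis-parallel unit squares in $\mathbb{R}^2$: a robot at position $p$ occupies $p+\boxdot$, $\boxdot=\{q:\|q\|_\infty\le 1/2\}$. Distances are measured in the $L_1$ norm $\|p\|=|x(p)|+|y(p)|$. A configuration of $k$ robots is a tuple $(p_1,\dots,p_k)$ with $\|p_i-p_j\|_\infty\ge 1$ for $i\ne j$; $\mathcal{F}_k$ is the set of configurations. A trajectory over $T=[t_0,t_1]$ is a $1$-Lipschitz (w.r.t. $L_1$) map $m:T\to\mathbb{R}^2$ whose image is a polygonal chain; a schedule is a tuple $M=(m_1,\dots,m_k)$ of trajectories over $T$, feasible if $M(t)\in\mathcal{F}_k$ for all $t\in T$; its total traveled length $\Sigma(M)$ is the sum of the lengths of the chains $m_i[T]$. Min-Sum CMP: given $A,B\in\mathcal{F}_k$, find the minimum total traveled length of a feasible schedule from $A$ to $B$ (and such a schedule). *)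

From Stdlib Require Import Reals List ZArith.
Import ListNotations.
Open Scope R_scope.

Definition pt := (R * R)%type.
Definition psub (p q : pt) : pt := (fst p - fst q, snd p - snd q).
(** L1 norm (distances) and L_infinity norm (separation of unit squares). *)
Definition n1 (p : pt) : R := Rabs (fst p) + Rabs (snd p).
Definition ninf (p : pt) : R := Rmax (Rabs (fst p)) (Rabs (snd p)).

Definition config2 := (pt * pt)%type.
Definition valid_config (c : config2) : Prop := ninf (psub (fst c) (snd c)) >= 1.

Definition segment (p q : pt) (z : pt) : Prop :=
  exists l, 0 <= l <= 1 /\
    z = (fst p + l * (fst q - fst p), snd p + l * (snd q - snd p)).

Fixpoint chain_set (P : list pt) (z : pt) : Prop :=
  match P with
  | nil => False
  | [p] => z = p
  | p :: ((q :: _) as tl) => segment p q z \/ chain_set tl z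
  end.

Definition lipschitz1 (m : R -> pt) (t0 t1 : R) : Prop :=
  forall t t', t0 <= t <= t1 -> t0 <= t' <= t1 -> n1 (psub (m t) (m t')) <= Rabs (t - t').

Definition polygonal_image (m : R -> pt) (t0 t1 : R) : Prop :=
  exists P : list pt, forall z, (exists t, t0 <= t <= t1 /\ m t = z) <-> chain_set P z.

Definition trajectory (m : R -> pt) (t0 t1 : R) : Prop :=
  t0 <= t1 /\ lipschitz1 m t0 t1 /\ polygonal_image m t0 t1.

Fixpoint var_sum (m : R -> pt) (l : list R) : R :=
  match l with
  | a :: ((b :: _) as tl) => n1 (psub (m b) (m a)) + var_sum m tl
  | _ => 0
  end.

Fixpoint nondecr (l : list R) : Prop :=
  match l with
  | a :: ((b :: _) as tl) => a <= b /\ nondecr tl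
  | _ => True
  end.

Definition partition_of (t0 t1 : R) (l : list R) : Prop :=
  nondecr (t0 :: l) /\ last (t0 :: l) t0 = t1.

Definition traveled_length (m : R -> pt) (t0 t1 L : R) : Prop :=
  is_lub (fun v => exists l, partition_of t0 t1 l /\ v = var_sum m (t0 :: l)) L.

Definition feasible_schedule (A B : config2) (t0 t1 : R) (m1 m2 : R -> pt) : Prop :=
  trajectory m1 t0 t1 /\ trajectory m2 t0 t1 /\
  m1 t0 = fst A /\ m2 t0 = snd A /\ m1 t1 = fst B /\ m2 t1 = snd B /\
  (forall t, t0 <= t <= t1 -> valid_config (m1 t, m2 t)).

Definition schedule_cost (m1 m2 : R -> pt) (t0 t1 c : R) : Prop :=
  exists L1 L2, traveled_length m1 t0 t1 L1 /\ traveled_length m2 t0 t1 L2 /\ c = L1 + L2.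

Definition is_min_sum_value (A B : config2) (v : R) : Prop :=
  (exists t0 t1 m1 m2, feasible_schedule A B t0 t1 m1 m2 /\ schedule_cost m1 m2 t0 t1 v) /\
  (forall t0 t1 m1 m2 c, feasible_schedule A B t0 t1 m1 m2 ->
       schedule_cost m1 m2 t0 t1 c -> v <= c).

(** * Constant-time computations (real RAM)
    A fixed, input-independent expression with arithmetic operations and
    comparisons; evaluating it takes time bounded by its (constant) size. *)
Inductive rexp : Type :=
| RVar : nat -> rexp
| RConst : Z -> rexp
| RAdd : rexp -> rexp -> rexp
| RSub : rexp -> rexp -> rexp
| RMul : rexp -> rexp -> rexp
| RDiv : rexp -> rexp -> rexp
| RIfLe : rexp -> rexp -> rexp -> rexp -> rexp.

Fixpoint reval (env : nat -> R) (e : rexp) : R :=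
  match e with
  | RVar i => env i
  | RConst z => IZR z
  | RAdd a b => reval env a + reval env b
  | RSub a b => reval env a - reval env b
  | RMul a b => reval env a * reval env b
  | RDiv a b => reval env a / reval env b
  | RIfLe a b c d => if Rle_dec (reval env a) (reval env b) then reval env c else reval env d
  end.

Definition input_env (A B : config2) (i : nat) : R :=
  match i with
  | 0 => fst (fst A) | 1 => snd (fst A) | 2 => fst (snd A) | 3 => snd (snd A)
  | 4 => fst (fst B) | 5 => snd (fst B) | 6 => fst (snd B) | 7 => snd (snd B)
  | _ => 0
  end.

Definition wexp := (rexp * rexp * rexp * rexp)%type.
Definition weval (env : nat -> R) (w : wexp) : config2 :=
  match w with (a, b, c, d) => ((reval env a, reval env b), (reval env c, reval env d)) end.

Definition lerp (p q : pt) (l : R) : pt :=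
  (fst p + l * (fst q - fst p), snd p + l * (snd q - snd p)).

Definition realizes (N : nat) (tau : nat -> R) (W : nat -> config2) (m1 m2 : R -> pt) : Prop :=
  forall k, (k < N)%nat ->
    tau k <= tau (S k) /\
    forall t, tau k <= t <= tau (S k) ->
      let l := (t - tau k) / (tau (S k) - tau k) in
      m1 t = lerp (fst (W k)) (fst (W (S k))) l /\
      m2 t = lerp (snd (W k)) (snd (W (S k))) l.

(* Each robot travels at least its L1 distance, and the gap [m1 - m2] must stay outside
   the open square (-1, 1)^2.  If the gap can reach its target by one axis-parallel move
   per axis without entering the square, moving both robots one axis at a time attains
   this bound.  Otherwise one coordinate of the gap changes sign across the square while
   the other stays strictly inside (-1, 1) at both ends.  By the intermediate value
   theorem the robots are then aligned in the first coordinate at some moment, where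
   their other coordinates differ by at least 1; this reduces the lower bound to a
   one-dimensional problem with a closed-form optimum [pass1, pass2], attained by the
   three-phase schedule (other axis, first axis, other axis).  The case distinction,
   the waypoints and the optimal value are fixed arithmetic expressions with comparisons
   in the eight input coordinates. *)

From Stdlib Require Import Reals List Lra Lia Classical.
Import ListNotations.
Open Scope R_scope.

Lemma n1_ge0 p : 0 <= n1 p.
Proof. unfold n1; pose proof (Rabs_pos (fst p)); pose proof (Rabs_pos (snd p)); lra. Qed.

Lemma n1_psubC p q : n1 (psub p q) = n1 (psub q p).
Proof. unfold n1, psub; simpl; rewrite (Rabs_minus_sym (fst p)), (Rabs_minus_sym (snd p)); auto. Qed.

Lemma n1_psub_triangle x y z : n1 (psub z x) <= n1 (psub z y) + n1 (psub y x).
Proof.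
  unfold n1, psub; simpl.
  pose proof (Rabs_triang (fst z - fst y) (fst y - fst x)).
  pose proof (Rabs_triang (snd z - snd y) (snd y - snd x)).
  replace (fst z - fst x) with ((fst z - fst y) + (fst y - fst x)) by ring.
  replace (snd z - snd x) with ((snd z - snd y) + (snd y - snd x)) by ring.
  lra.
Qed.

Lemma n1_psub_diag p : n1 (psub p p) = 0.
Proof. unfold n1, psub; simpl; rewrite !Rminus_diag, !Rabs_R0; ring. Qed.

Lemma n1_psub_le0 p q : n1 (psub q p) <= 0 -> q = p.
Proof. destruct p, q; unfold n1, psub; simpl; intros; split_Rabs; f_equal; lra. Qed.

Definition coord (i : bool) (p : pt) : R := if i then fst p else snd p.
Definition mkpt (i : bool) (a b : R) : pt := if i then (a, b) else (b, a).

Lemma coord_mkpt i a b : coord i (mkpt i a b) = a.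
Proof. now destruct i. Qed.

Lemma coord_negb_mkpt i a b : coord (negb i) (mkpt i a b) = b.
Proof. now destruct i. Qed.

Lemma coord_psub i p q : coord i (psub p q) = coord i p - coord i q.
Proof. now destruct i. Qed.

Lemma psub_mkpt i a b a' b' : psub (mkpt i a b) (mkpt i a' b') = mkpt i (a - a') (b - b').
Proof. now destruct i. Qed.

Lemma n1_coord i p : n1 p = Rabs (coord i p) + Rabs (coord (negb i) p).
Proof. destruct i; unfold n1; simpl; lra. Qed.

Lemma n1_psub_coord i p q :
  n1 (psub p q) = Rabs (coord i p - coord i q) + Rabs (coord (negb i) p - coord (negb i) q).
Proof. rewrite (n1_coord i), !coord_psub; reflexivity. Qed.

Lemma ninf_coord i p : ninf p = Rmax (Rabs (coord i p)) (Rabs (coord (negb i) p)).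
Proof. destruct i; unfold ninf; simpl; [reflexivity | apply Rmax_comm]. Qed.

Lemma coord_le_n1 i p : Rabs (coord i p) <= n1 p.
Proof. rewrite (n1_coord i); pose proof (Rabs_pos (coord (negb i) p)); lra. Qed.

(** * Piecewise linear trajectories *)

Definition seg_param (a b t : R) : R := (t - a) / (b - a).
Definition seg_motion (p q : pt) (a b t : R) : pt := lerp p q (seg_param a b t).

Lemma lerp_0 p q : lerp p q 0 = p.
Proof. destruct p, q; unfold lerp; simpl; f_equal; ring. Qed.

Lemma lerp_1 p q : lerp p q 1 = q.
Proof. destruct p, q; unfold lerp; simpl; f_equal; ring. Qed.

Lemma n1_psub_lerp p q l l' :
  n1 (psub (lerp p q l') (lerp p q l)) = Rabs (l' - l) * n1 (psub q p).
Proof.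
  destruct p as [px py], q as [qx qy]; unfold n1, psub, lerp; simpl.
  replace (px + l' * (qx - px) - (px + l * (qx - px))) with ((l' - l) * (qx - px)) by ring.
  replace (py + l' * (qy - py) - (py + l * (qy - py))) with ((l' - l) * (qy - py)) by ring.
  rewrite !Rabs_mult; ring.
Qed.

Lemma psub_lerp a b c d l : psub (lerp a b l) (lerp c d l) = lerp (psub a c) (psub b d) l.
Proof. destruct a, b, c, d; unfold psub, lerp; simpl; f_equal; ring. Qed.

Lemma seg_param_start a b : seg_param a b a = 0.
Proof. unfold seg_param; rewrite Rminus_diag; apply Rdiv_0_l. Qed.

Lemma seg_param_end a b : a < b -> seg_param a b b = 1.
Proof. intros; unfold seg_param; field; lra. Qed.

Lemma mul_seg_param_end a b e : a <= b -> 0 <= e <= b - a -> e * seg_param a b b = e.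
Proof.
  intros; destruct (Req_dec a b) as [<-|Hne].
  - replace e with 0 by lra; ring.
  - rewrite seg_param_end by lra; ring.
Qed.

(* On a degenerate interval the parameter is the junk value [x / 0 = 0]. *)
Lemma seg_param_degenerate a t : seg_param a a t = 0.
Proof. unfold seg_param; rewrite Rminus_diag; apply Rdiv_0_r. Qed.

Lemma seg_param_range a b t : a <= t <= b -> 0 <= seg_param a b t <= 1.
Proof.
  intros Ht; destruct (Req_dec a b) as [<-|Hab].
  - rewrite seg_param_degenerate; lra.
  - unfold seg_param, Rdiv.
    assert (Hinv : 0 < / (b - a)) by (apply Rinv_0_lt_compat; lra).
    assert ((b - a) * / (b - a) = 1) by (field; lra).
    split; nra.
Qed.

Lemma seg_motion_start p q a b : seg_motion p q a b a = p.
Proof. unfold seg_motion; rewrite seg_param_start; apply lerp_0. Qed.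

Lemma seg_motion_end p q a b : a <= b -> n1 (psub q p) <= b - a -> seg_motion p q a b b = q.
Proof.
  intros Hab Hpq; unfold seg_motion; destruct (Req_dec a b) as [<-|Hne].
  - rewrite seg_param_degenerate, lerp_0; symmetry; apply n1_psub_le0; lra.
  - rewrite seg_param_end by lra; apply lerp_1.
Qed.

Lemma seg_motion_onto m p q a b z : a <= b -> n1 (psub q p) <= b - a ->
  (forall t, a <= t <= b -> m t = seg_motion p q a b t) ->
  segment p q z -> exists t, a <= t <= b /\ m t = z.
Proof.
  intros Hab Hpq Hm [l [Hl ->]]; destruct (Req_dec a b) as [<-|Hne].
  - assert (q = p) as -> by (apply n1_psub_le0; lra).
    exists a; split; [lra|]; rewrite Hm, seg_motion_start by lra.
    destruct p; simpl; f_equal; ring.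
  - exists (a + l * (b - a)); split; [nra|]; rewrite Hm by nra.
    unfold seg_motion; replace (seg_param a b (a + l * (b - a))) with l; [reflexivity|].
    unfold seg_param; field; lra.
Qed.

(* An arc-length gauge: it bounds every partition sum of [m] by [g b - g a] and makes
   [m] 1-Lipschitz. *)
Definition gauged (m : R -> pt) (g : R -> R) (a b : R) : Prop :=
  forall t t', a <= t -> t <= t' -> t' <= b ->
    n1 (psub (m t') (m t)) <= g t' - g t /\ g t' - g t <= t' - t.

Lemma gauged_concat m g a b c : gauged m g a b -> gauged m g b c -> gauged m g a c.
Proof.
  intros H1 H2 t t' ? ? ?.
  destruct (Rle_dec t' b); [apply H1; lra|].
  destruct (Rle_dec b t); [apply H2; lra|].
  destruct (H1 t b), (H2 b t'); try lra.
  pose proof (n1_psub_triangle (m t) (m b) (m t')); lra.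
Qed.

Lemma gauged_seg_motion m g p q g0 a b : a <= b -> n1 (psub q p) <= b - a ->
  (forall t, a <= t <= b -> m t = seg_motion p q a b t) ->
  (forall t, a <= t <= b -> g t = g0 + n1 (psub q p) * seg_param a b t) ->
  gauged m g a b.
Proof.
  intros Hab Hpq Hm Hg t t' ? ? ?.
  rewrite (Hm t), (Hm t'), (Hg t), (Hg t') by lra; unfold seg_motion; rewrite n1_psub_lerp.
  set (e := n1 (psub q p)) in *; pose proof (n1_ge0 (psub q p)).
  destruct (Req_dec a b) as [<-|Hne].
  - rewrite !seg_param_degenerate, Rminus_diag, Rabs_R0; lra.
  - unfold seg_param, Rdiv.
    assert (Hr : 0 < / (b - a)) by (apply Rinv_0_lt_compat; lra).
    assert ((b - a) * / (b - a) = 1) by (field; lra).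
    set (r := / (b - a)) in *.
    replace ((t' - a) * r - (t - a) * r) with ((t' - t) * r) by ring.
    rewrite Rabs_right by nra.
    assert (e * r <= 1) by nra.
    split; nra.
Qed.

Lemma gauged_lipschitz m g a b : gauged m g a b -> lipschitz1 m a b.
Proof.
  intros H t t' Ht Ht'; destruct (Rle_dec t t').
  - destruct (H t t'); try lra.
    rewrite n1_psubC, Rabs_left1 by lra; lra.
  - destruct (H t' t); try lra.
    rewrite Rabs_right by lra; lra.
Qed.

Lemma last_cons_default (y d d' : R) l : last (y :: l) d = last (y :: l) d'.
Proof.
  revert y; induction l as [|a l IH]; intros y; [reflexivity|].
  apply (IH a).
Qed.

Lemma nondecr_le_last x l : nondecr (x :: l) -> x <= last (x :: l) x.
Proof.
  revert x; induction l as [|y l IH]; intros x H; [simpl; lra|].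
  destruct H as [Hxy Hl]; specialize (IH y Hl).
  change (x <= last (y :: l) x); rewrite (last_cons_default y x y); lra.
Qed.

Lemma var_sum_le_gauge m g a b : gauged m g a b -> forall l x, a <= x -> nondecr (x :: l) ->
  last (x :: l) x <= b -> var_sum m (x :: l) <= g (last (x :: l) x) - g x.
Proof.
  intros H l; induction l as [|y l IH]; intros x Hx Hn Hl; [simpl; lra|].
  destruct Hn as [Hxy Hn].
  change (last (x :: y :: l) x) with (last (y :: l) x) in *.
  rewrite (last_cons_default y x y) in *.
  pose proof (nondecr_le_last y l Hn).
  specialize (IH y ltac:(lra) Hn Hl).
  change (var_sum m (x :: y :: l)) with (n1 (psub (m y) (m x)) + var_sum m (y :: l)).
  destruct (H x y); lra.
Qed.

Definition piecewise3 {X : Type} (t1 t2 : R) (f0 f1 f2 : R -> X) (t : R) : X :=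
  if Rle_dec t t1 then f0 t else if Rle_dec t t2 then f1 t else f2 t.

Section Piecewise3.
Context {X : Type} (t1 t2 : R) (f0 f1 f2 : R -> X).
Hypotheses (Ht12 : t1 <= t2) (E1 : f0 t1 = f1 t1) (E2 : f1 t2 = f2 t2).

Lemma piecewise3_0 t : t <= t1 -> piecewise3 t1 t2 f0 f1 f2 t = f0 t.
Proof. intros; unfold piecewise3; destruct (Rle_dec t t1); [auto | lra]. Qed.

Lemma piecewise3_1 t : t1 <= t <= t2 -> piecewise3 t1 t2 f0 f1 f2 t = f1 t.
Proof.
  intros; unfold piecewise3; destruct (Rle_dec t t1).
  - replace t with t1 by lra; auto.
  - destruct (Rle_dec t t2); [auto | lra].
Qed.

Lemma piecewise3_2 t : t2 <= t -> piecewise3 t1 t2 f0 f1 f2 t = f2 t.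
Proof.
  intros; destruct (Rle_dec t t2).
  - replace t with t2 by lra; rewrite piecewise3_1 by lra; auto.
  - unfold piecewise3; destruct (Rle_dec t t1), (Rle_dec t t2); auto; lra.
Qed.

End Piecewise3.

Section Polyline3.
Variables (P : nat -> pt) (T : nat -> R).
Hypotheses (HT : forall k, (k < 3)%nat -> T k <= T (S k))
  (HP : forall k, (k < 3)%nat -> n1 (psub (P (S k)) (P k)) <= T (S k) - T k).

Let P0 := P 0%nat. Let P1 := P 1%nat. Let P2 := P 2%nat. Let P3 := P 3%nat.
Let T0 := T 0%nat. Let T1 := T 1%nat. Let T2 := T 2%nat. Let T3 := T 3%nat.
Let H01 : T0 <= T1 := HT 0%nat ltac:(lia).
Let H12 : T1 <= T2 := HT 1%nat ltac:(lia).
Let H23 : T2 <= T3 := HT 2%nat ltac:(lia).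
Let E01 : n1 (psub P1 P0) <= T1 - T0 := HP 0%nat ltac:(lia).
Let E12 : n1 (psub P2 P1) <= T2 - T1 := HP 1%nat ltac:(lia).
Let E23 : n1 (psub P3 P2) <= T3 - T2 := HP 2%nat ltac:(lia).

Definition polyline3 : R -> pt :=
  piecewise3 T1 T2 (seg_motion P0 P1 T0 T1) (seg_motion P1 P2 T1 T2) (seg_motion P2 P3 T2 T3).

Let J1 : seg_motion P0 P1 T0 T1 T1 = seg_motion P1 P2 T1 T2 T1.
Proof. rewrite seg_motion_end, seg_motion_start; auto. Qed.

Let J2 : seg_motion P1 P2 T1 T2 T2 = seg_motion P2 P3 T2 T3 T2.
Proof. rewrite seg_motion_end, seg_motion_start; auto. Qed.

Lemma polyline3_0 t : t <= T1 -> polyline3 t = seg_motion P0 P1 T0 T1 t.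
Proof. apply piecewise3_0. Qed.

Lemma polyline3_1 t : T1 <= t <= T2 -> polyline3 t = seg_motion P1 P2 T1 T2 t.
Proof. apply piecewise3_1; auto. Qed.

Lemma polyline3_2 t : T2 <= t -> polyline3 t = seg_motion P2 P3 T2 T3 t.
Proof. apply piecewise3_2; auto. Qed.

Lemma polyline3_piece k t : (k < 3)%nat -> T k <= t <= T (S k) ->
  polyline3 t = seg_motion (P k) (P (S k)) (T k) (T (S k)) t.
Proof.
  intros Hk Ht; destruct k as [|[|[|k]]]; try lia;
    [apply polyline3_0 | apply polyline3_1 | apply polyline3_2]; unfold T1, T2 in *; lra.
Qed.

Lemma polyline3_waypoints :
  polyline3 T0 = P0 /\ polyline3 T1 = P1 /\ polyline3 T2 = P2 /\ polyline3 T3 = P3.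
Proof.
  rewrite polyline3_0, polyline3_1, !polyline3_2 by lra.
  rewrite !seg_motion_start, seg_motion_end; auto.
Qed.

Let e0 := n1 (psub P1 P0).
Let e1 := n1 (psub P2 P1).
Let e2 := n1 (psub P3 P2).

Definition polyline3_gauge : R -> R :=
  piecewise3 T1 T2 (fun t => 0 + e0 * seg_param T0 T1 t) (fun t => e0 + e1 * seg_param T1 T2 t)
    (fun t => e0 + e1 + e2 * seg_param T2 T3 t).

Let G1 : 0 + e0 * seg_param T0 T1 T1 = e0 + e1 * seg_param T1 T2 T1.
Proof. rewrite seg_param_start, mul_seg_param_end; [ring | lra | split; [apply n1_ge0 | auto]]. Qed.

Let G2 : e0 + e1 * seg_param T1 T2 T2 = e0 + e1 + e2 * seg_param T2 T3 T2.
Proof. rewrite seg_param_start, mul_seg_param_end; [ring | lra | split; [apply n1_ge0 | auto]]. Qed.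

Lemma polyline3_gauged : gauged polyline3 polyline3_gauge T0 T3.
Proof.
  unfold polyline3_gauge.
  apply (gauged_concat _ _ _ T2); [apply (gauged_concat _ _ _ T1)|].
  - apply (gauged_seg_motion _ _ P0 P1 0); auto; intros.
    + apply polyline3_0; lra.
    + rewrite piecewise3_0 by lra; reflexivity.
  - apply (gauged_seg_motion _ _ P1 P2 e0); auto; intros.
    + apply polyline3_1; lra.
    + rewrite piecewise3_1; auto.
  - apply (gauged_seg_motion _ _ P2 P3 (e0 + e1)); auto; intros.
    + apply polyline3_2; lra.
    + rewrite piecewise3_2; auto; lra.
Qed.

Lemma polyline3_image : polygonal_image polyline3 T0 T3.
Proof.
  exists [P0; P1; P2; P3]; intros z; split.
  - intros [t [Ht <-]]; simpl.
    destruct (Rle_dec t T1); [|destruct (Rle_dec t T2)].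
    + left; rewrite polyline3_0 by lra; exists (seg_param T0 T1 t).
      split; [apply seg_param_range; lra | reflexivity].
    + right; left; rewrite polyline3_1 by lra; exists (seg_param T1 T2 t).
      split; [apply seg_param_range; lra | reflexivity].
    + right; right; left; rewrite polyline3_2 by lra; exists (seg_param T2 T3 t).
      split; [apply seg_param_range; lra | reflexivity].
  - simpl; intros [Hz | [Hz | [Hz | ->]]].
    + destruct (seg_motion_onto polyline3 P0 P1 T0 T1 z) as [t [? ?]]; auto.
      * intros; apply polyline3_0; lra.
      * exists t; split; [lra | auto].
    + destruct (seg_motion_onto polyline3 P1 P2 T1 T2 z) as [t [? ?]]; auto.
      * intros; apply polyline3_1; lra.
      * exists t; split; [lra | auto].
    + destruct (seg_motion_onto polyline3 P2 P3 T2 T3 z) as [t [? ?]]; auto.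
      * intros; apply polyline3_2; lra.
      * exists t; split; [lra | auto].
    + exists T3; split; [lra | apply polyline3_waypoints].
Qed.

Lemma polyline3_trajectory : trajectory polyline3 T0 T3.
Proof.
  split; [lra|]; split.
  - exact (gauged_lipschitz _ _ _ _ polyline3_gauged).
  - exact polyline3_image.
Qed.

Lemma polyline3_length : traveled_length polyline3 T0 T3 (e0 + e1 + e2).
Proof.
  destruct polyline3_waypoints as [M0 [M1 [M2 M3]]].
  split.
  - assert (g0 : polyline3_gauge T0 = 0).
    { unfold polyline3_gauge; rewrite piecewise3_0, seg_param_start by lra; ring. }
    assert (g3 : polyline3_gauge T3 = e0 + e1 + e2).
    { unfold polyline3_gauge; rewrite piecewise3_2 by auto.
      rewrite mul_seg_param_end; [reflexivity | lra | split; [apply n1_ge0 | auto]]. }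
    intros v [l [[Hn Hl] ->]].
    pose proof (var_sum_le_gauge _ _ _ _ polyline3_gauged l T0 ltac:(lra) Hn ltac:(rewrite Hl; lra))
      as Hv.
    rewrite Hl, g0, g3 in Hv; lra.
  - intros M HM; apply HM; exists [T1; T2; T3]; split.
    + split; simpl; [repeat split; lra | auto].
    + simpl; rewrite M0, M1, M2, M3; unfold e0, e1, e2; ring.
Qed.

End Polyline3.

(* The segment from [u] to [v] at level [c] on the other axis misses the open square
   (-1, 1)^2. *)
Definition pass_clear (c u v : R) : Prop :=
  1 <= c \/ c <= -1 \/ (u <= -1 /\ v <= -1) \/ (1 <= u /\ 1 <= v).

Definition clear_axis_move (d d' : pt) : Prop :=
  exists i, coord (negb i) d = coord (negb i) d' /\
    pass_clear (coord (negb i) d) (coord i d) (coord i d').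

Definition gap (W : config2) : pt := psub (fst W) (snd W).
Definition phase_len (W W' : config2) : R :=
  n1 (psub (fst W') (fst W)) + n1 (psub (snd W') (snd W)).

Lemma ninf_ge1_cases p : ninf p >= 1 <-> fst p <= -1 \/ 1 <= fst p \/ snd p <= -1 \/ 1 <= snd p.
Proof.
  destruct p as [x y]; unfold ninf, Rmax; simpl.
  destruct Rle_dec; split_Rabs; lra.
Qed.

Lemma clear_axis_move_lerp d d' l : clear_axis_move d d' -> 0 <= l <= 1 -> ninf (lerp d d' l) >= 1.
Proof.
  intros [i [E H]] Hl; apply ninf_ge1_cases.
  destruct d as [dx dy], d' as [ex ey], i; unfold pass_clear, lerp in *; simpl in *; subst.
  - replace (ey + l * (ey - ey)) with ey by ring; nra.
  - replace (ex + l * (ex - ex)) with ex by ring; nra.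
Qed.

Lemma clear_axis_move_refl d : ninf d >= 1 -> clear_axis_move d d.
Proof.
  intros H; apply ninf_ge1_cases in H.
  destruct H as [H|[H|H]]; [exists false | exists false | exists true];
    unfold pass_clear; simpl; lra.
Qed.

Lemma waypoint_schedule3 (tau : nat -> R) (W : nat -> config2) :
  tau 0%nat = 0 ->
  (forall k, (k < 3)%nat -> tau (S k) = tau k + phase_len (W k) (W (S k))) ->
  (forall k, (k < 3)%nat -> clear_axis_move (gap (W k)) (gap (W (S k)))) ->
  exists m1 m2, realizes 3 tau W m1 m2 /\
    feasible_schedule (W 0%nat) (W 3%nat) (tau 0%nat) (tau 3%nat) m1 m2 /\
    schedule_cost m1 m2 (tau 0%nat) (tau 3%nat) (tau 3%nat).
Proof.
  intros T0 HT HC.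
  assert (Hlen : forall k, (k < 3)%nat ->
    tau k <= tau (S k) /\
    n1 (psub (fst (W (S k))) (fst (W k))) <= tau (S k) - tau k /\
    n1 (psub (snd (W (S k))) (snd (W k))) <= tau (S k) - tau k).
  { intros k Hk; rewrite (HT k Hk); unfold phase_len.
    pose proof (n1_ge0 (psub (fst (W (S k))) (fst (W k)))).
    pose proof (n1_ge0 (psub (snd (W (S k))) (snd (W k)))); lra. }
  assert (Htau : forall k, (k < 3)%nat -> tau k <= tau (S k)) by apply Hlen.
  assert (H1 : forall k, (k < 3)%nat -> n1 (psub (fst (W (S k))) (fst (W k))) <= tau (S k) - tau k)
    by apply Hlen.
  assert (H2 : forall k, (k < 3)%nat -> n1 (psub (snd (W (S k))) (snd (W k))) <= tau (S k) - tau k)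
    by apply Hlen.
  set (m1 := polyline3 (fun k => fst (W k)) tau); set (m2 := polyline3 (fun k => snd (W k)) tau).
  assert (Hpiece : forall k, (k < 3)%nat -> forall t, tau k <= t <= tau (S k) ->
    m1 t = seg_motion (fst (W k)) (fst (W (S k))) (tau k) (tau (S k)) t /\
    m2 t = seg_motion (snd (W k)) (snd (W (S k))) (tau k) (tau (S k)) t).
  { intros k Hk t Ht; split; [apply (polyline3_piece (fun k => fst (W k))) |
                               apply (polyline3_piece (fun k => snd (W k)))]; auto. }
  destruct (polyline3_waypoints (fun k => fst (W k)) tau) as [M0 [_ [_ M3]]]; auto.
  destruct (polyline3_waypoints (fun k => snd (W k)) tau) as [N0 [_ [_ N3]]]; auto.
  exists m1, m2; split; [|split].
  - intros k Hk; split; [apply Htau; exact Hk | apply Hpiece; exact Hk].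
  - do 2 (split; [apply polyline3_trajectory; auto|]).
    do 4 (split; [auto|]).
    intros t Ht; unfold valid_config; simpl.
    assert (Hk : exists k, (k < 3)%nat /\ tau k <= t <= tau (S k)).
    { destruct (Rle_dec t (tau 1%nat)); [exists 0%nat; split; [lia | lra]|].
      destruct (Rle_dec t (tau 2%nat)); [exists 1%nat | exists 2%nat]; split; lia || lra. }
    destruct Hk as [k [Hk Htk]]; destruct (Hpiece k Hk t Htk) as [-> ->].
    unfold seg_motion; rewrite psub_lerp.
    apply clear_axis_move_lerp; [apply HC; auto | apply seg_param_range; auto].
  - do 2 eexists; split; [apply polyline3_length; auto|].
    split; [apply polyline3_length; auto|].
    rewrite (HT 2%nat), (HT 1%nat), (HT 0%nat), T0 by lia; unfold phase_len; ring.
Qed.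

(** * Lower bounds *)

Lemma traveled_length_ge_via m a b L t : traveled_length m a b L -> a <= t <= b ->
  n1 (psub (m t) (m a)) + n1 (psub (m b) (m t)) <= L.
Proof.
  intros [H _] Ht; apply H; exists [t; b]; split.
  - split; simpl; [lra | auto].
  - simpl; ring.
Qed.

Lemma schedule_cost_ge_via A B t0 t1 m1 m2 c t :
  feasible_schedule A B t0 t1 m1 m2 -> schedule_cost m1 m2 t0 t1 c -> t0 <= t <= t1 ->
  n1 (psub (m1 t) (fst A)) + n1 (psub (fst B) (m1 t)) +
  n1 (psub (m2 t) (snd A)) + n1 (psub (snd B) (m2 t)) <= c.
Proof.
  intros [_ [_ [<- [<- [<- [<- _]]]]]] [L1 [L2 [H1 [H2 ->]]]] Ht.
  pose proof (traveled_length_ge_via m1 t0 t1 L1 t H1 Ht).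
  pose proof (traveled_length_ge_via m2 t0 t1 L2 t H2 Ht); lra.
Qed.

Lemma schedule_cost_ge_dist A B t0 t1 m1 m2 c :
  feasible_schedule A B t0 t1 m1 m2 -> schedule_cost m1 m2 t0 t1 c -> phase_len A B <= c.
Proof.
  intros HF HC; pose proof HF as [[Ht _] [_ [E1 [E2 _]]]].
  pose proof (schedule_cost_ge_via A B t0 t1 m1 m2 c t0 HF HC ltac:(lra)) as H.
  rewrite E1, E2, !n1_psub_diag in H; unfold phase_len; lra.
Qed.

Definition clamp (t0 t1 t : R) : R := Rmax t0 (Rmin t t1).

Lemma clamp_range t0 t1 t : t0 <= t1 -> t0 <= clamp t0 t1 t <= t1.
Proof. intros; unfold clamp, Rmax, Rmin; repeat destruct Rle_dec; lra. Qed.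

Lemma clamp_id t0 t1 t : t0 <= t <= t1 -> clamp t0 t1 t = t.
Proof. intros; unfold clamp, Rmax, Rmin; repeat destruct Rle_dec; lra. Qed.

Lemma clamp_lipschitz t0 t1 a b : t0 <= t1 -> Rabs (clamp t0 t1 a - clamp t0 t1 b) <= Rabs (a - b).
Proof. intros; unfold clamp, Rmax, Rmin; repeat destruct Rle_dec; split_Rabs; lra. Qed.

Lemma lipschitz_continuity (f : R -> R) (K : R) : 0 < K ->
  (forall a b, Rabs (f a - f b) <= K * Rabs (a - b)) -> continuity f.
Proof.
  intros HK H x eps Heps; exists (eps / K); split; [apply Rdiv_lt_0_compat; lra|].
  intros y [_ Hy]; simpl in *; unfold R_dist in *.
  pose proof (H y x).
  assert (K * Rabs (y - x) < K * (eps / K)) by (apply Rmult_lt_compat_l; lra).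
  replace (K * (eps / K)) with eps in * by (field; lra); lra.
Qed.

Lemma schedule_aligned_somewhere i A B t0 t1 m1 m2 :
  feasible_schedule A B t0 t1 m1 m2 -> coord i (gap A) * coord i (gap B) <= 0 ->
  exists t, t0 <= t <= t1 /\ coord i (m1 t) = coord i (m2 t).
Proof.
  intros [[Ht [L1 _]] [[_ [L2 _]] [E1 [E2 [E3 [E4 _]]]]]] Hs.
  set (h := fun t => coord i (m1 (clamp t0 t1 t)) - coord i (m2 (clamp t0 t1 t))).
  assert (Hc : continuity h).
  { apply (lipschitz_continuity h 2); [lra|]; intros a b; unfold h.
    pose proof (clamp_lipschitz t0 t1 a b Ht).
    pose proof (clamp_range t0 t1 a Ht); pose proof (clamp_range t0 t1 b Ht).
    set (ca := clamp t0 t1 a) in *; set (cb := clamp t0 t1 b) in *.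
    pose proof (L1 ca cb ltac:(lra) ltac:(lra)); pose proof (L2 ca cb ltac:(lra) ltac:(lra)).
    pose proof (coord_le_n1 i (psub (m1 ca) (m1 cb))).
    pose proof (coord_le_n1 i (psub (m2 ca) (m2 cb))).
    rewrite !coord_psub in *.
    pose proof (Rabs_triang (coord i (m1 ca) - coord i (m1 cb)) (- (coord i (m2 ca) - coord i (m2 cb)))).
    rewrite Rabs_Ropp in *.
    replace (coord i (m1 ca) - coord i (m2 ca) - (coord i (m1 cb) - coord i (m2 cb))) with
      ((coord i (m1 ca) - coord i (m1 cb)) + - (coord i (m2 ca) - coord i (m2 cb))) by ring.
    pose proof (Rabs_pos (a - b)); lra. }
  destruct (IVT_cor h t0 t1 Hc Ht) as [z [Hz Hz0]].
  { unfold h; rewrite !clamp_id by lra; rewrite E1, E2, E3, E4.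
    unfold gap in Hs; rewrite !coord_psub in Hs; exact Hs. }
  exists z; split; auto; unfold h in Hz0; rewrite clamp_id in Hz0 by lra; lra.
Qed.

Definition side (s : R) : R := if Rle_dec 0 s then 1 else -1.

Definition pass_side (a1 a2 b1 b2 : R) : R := side ((a1 - a2) + (b1 - b2)).

Definition pass_sum (a1 a2 b1 b2 : R) : R :=
  let u := Rabs (pass_side a1 a2 b1 b2 - (a1 - a2)) in
  (a1 + a2) + Rmax (- u) (Rmin ((b1 + b2) - (a1 + a2)) u).

Definition pass1 (a1 a2 b1 b2 : R) : R := (pass_sum a1 a2 b1 b2 + pass_side a1 a2 b1 b2) / 2.
Definition pass2 (a1 a2 b1 b2 : R) : R := (pass_sum a1 a2 b1 b2 - pass_side a1 a2 b1 b2) / 2.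

Lemma side_cases s : side s = 1 \/ side s = -1.
Proof. unfold side; destruct Rle_dec; auto. Qed.

Lemma Rabs_half_sum_diff p q : Rabs ((p + q) / 2) + Rabs ((p - q) / 2) = Rmax (Rabs p) (Rabs q).
Proof. unfold Rmax; destruct Rle_dec; split_Rabs; lra. Qed.

(* In the coordinates [z1 + z2] and [z1 - z2] the L1 cost of moving the pair is a
   maximum (Rabs_half_sum_diff); for the gap [z1 - z2 = pass_side] it is minimised by
   clamping the sum, and [pass_side] is the better of the two gaps [1] and [-1]. *)
Lemma pass_cost_le a1 a2 b1 b2 z1 z2 :
  -1 < a1 - a2 < 1 -> -1 < b1 - b2 < 1 -> 1 <= Rabs (z1 - z2) ->
  let p1 := pass1 a1 a2 b1 b2 in let p2 := pass2 a1 a2 b1 b2 in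
  Rabs (p1 - a1) + Rabs (b1 - p1) + Rabs (p2 - a2) + Rabs (b2 - p2)
  <= Rabs (z1 - a1) + Rabs (b1 - z1) + Rabs (z2 - a2) + Rabs (b2 - z2).
Proof.
  intros Ha Hb Hz p1 p2; unfold p1, p2, pass1, pass2.
  set (ys := pass_side a1 a2 b1 b2); set (s := pass_sum a1 a2 b1 b2).
  set (RHS := Rabs (z1 - a1) + Rabs (b1 - z1) + Rabs (z2 - a2) + Rabs (b2 - z2)).
  set (al := a1 + a2); set (be := b1 + b2); set (ay := a1 - a2) in *; set (by_ := b1 - b2) in *.
  replace ((s + ys) / 2 - a1) with (((s - al) + (ys - ay)) / 2) by (unfold al, ay; field).
  replace ((s - ys) / 2 - a2) with (((s - al) - (ys - ay)) / 2) by (unfold al, ay; field).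
  replace (b1 - (s + ys) / 2) with (((be - s) + (by_ - ys)) / 2) by (unfold be, by_; field).
  replace (b2 - (s - ys) / 2) with (((be - s) - (by_ - ys)) / 2) by (unfold be, by_; field).
  enough (Rmax (Rabs (s - al)) (Rabs (ys - ay)) + Rmax (Rabs (be - s)) (Rabs (by_ - ys)) <= RHS)
    by (pose proof (Rabs_half_sum_diff (s - al) (ys - ay));
        pose proof (Rabs_half_sum_diff (be - s) (by_ - ys)); lra).
  assert (Hsum : Rabs (be - al) <= RHS) by (unfold RHS, be, al; split_Rabs; lra).
  assert (Hdiff : Rabs (ys - ay) + Rabs (by_ - ys) <= RHS).
  { assert (Rabs ((z1 - z2) - ay) + Rabs (by_ - (z1 - z2)) <= RHS)
      by (unfold RHS, ay, by_; clear; split_Rabs; lra).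
    assert (Rabs (ys - ay) + Rabs (by_ - ys) <= Rabs ((z1 - z2) - ay) + Rabs (by_ - (z1 - z2))).
    { unfold ys, pass_side, side; fold ay by_; destruct Rle_dec; split_Rabs; lra. }
    lra. }
  assert (Es : s = al + Rmax (- Rabs (ys - ay)) (Rmin (be - al) (Rabs (ys - ay)))) by reflexivity.
  clearbody s ys; subst s; clear Hz.
  set (u := Rabs (ys - ay)) in *; set (w := Rabs (by_ - ys)) in *.
  assert (0 <= u) by apply Rabs_pos; assert (0 <= w) by apply Rabs_pos.
  unfold Rmax at 3, Rmin; repeat destruct Rle_dec; unfold Rmax; repeat destruct Rle_dec;
    split_Rabs; lra.
Qed.

Definition crosses (i : bool) (A B : config2) : Prop :=
  ((coord i (gap A) <= -1 /\ 1 <= coord i (gap B)) \/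
   (1 <= coord i (gap A) /\ coord i (gap B) <= -1)) /\
  (-1 < coord (negb i) (gap A) < 1) /\ (-1 < coord (negb i) (gap B) < 1).

Definition first_clear (i : bool) (A B : config2) : Prop :=
  pass_clear (coord (negb i) (gap A)) (coord i (gap A)) (coord i (gap B)) /\
  pass_clear (coord i (gap B)) (coord (negb i) (gap A)) (coord (negb i) (gap B)).

Definition clear_plan (A W1 W2 B : config2) : Prop :=
  clear_axis_move (gap A) (gap W1) /\ clear_axis_move (gap W1) (gap W2) /\
  clear_axis_move (gap W2) (gap B).

Definition plan_lower_bound (A W1 W2 B : config2) : Prop :=
  forall t0 t1 m1 m2 c, feasible_schedule A B t0 t1 m1 m2 -> schedule_cost m1 m2 t0 t1 c ->
    phase_len A W1 + phase_len W1 W2 + phase_len W2 B <= c.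

Definition optimal_plan (A W1 W2 B : config2) : Prop :=
  clear_plan A W1 W2 B /\ plan_lower_bound A W1 W2 B.

Definition first_waypoint (i : bool) (A B : config2) : config2 :=
  (mkpt i (coord i (fst B)) (coord (negb i) (fst A)),
   mkpt i (coord i (snd B)) (coord (negb i) (snd A))).

Definition cross_waypoints (i : bool) (A B : config2) : config2 * config2 :=
  let j := negb i in
  let z1 := pass1 (coord j (fst A)) (coord j (snd A)) (coord j (fst B)) (coord j (snd B)) in
  let z2 := pass2 (coord j (fst A)) (coord j (snd A)) (coord j (fst B)) (coord j (snd B)) in
  ((mkpt i (coord i (fst A)) z1, mkpt i (coord i (snd A)) z2),
   (mkpt i (coord i (fst B)) z1, mkpt i (coord i (snd B)) z2)).

Lemma first_plan_optimal i A B :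
  valid_config B -> first_clear i A B -> optimal_plan A (first_waypoint i A B) B B.
Proof.
  intros HB [H1 H2]; unfold first_clear, gap in *; rewrite !coord_psub in H1, H2.
  split; [split; [|split]|].
  - exists i; unfold gap, first_waypoint; simpl.
    rewrite psub_mkpt, !coord_psub, coord_mkpt, coord_negb_mkpt; auto.
  - exists (negb i); unfold gap, first_waypoint; simpl; rewrite Bool.negb_involutive.
    rewrite psub_mkpt, !coord_psub, coord_mkpt, coord_negb_mkpt; auto.
  - apply clear_axis_move_refl, HB.
  - intros t0 t1 m1 m2 c HF HC; generalize (schedule_cost_ge_dist A B t0 t1 m1 m2 c HF HC).
    unfold phase_len, first_waypoint; simpl.
    rewrite !(n1_psub_coord i), !coord_mkpt, !coord_negb_mkpt, !Rminus_diag, !Rabs_R0; lra.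
Qed.

Lemma cross_plan_clear i A B :
  crosses i A B -> clear_plan A (fst (cross_waypoints i A B)) (snd (cross_waypoints i A B)) B.
Proof.
  intros [Hi [HjA HjB]]; unfold gap in *; repeat rewrite coord_psub in *.
  unfold cross_waypoints; simpl.
  set (j := negb i) in *.
  set (a1 := coord j (fst A)) in *; set (a2 := coord j (snd A)) in *.
  set (b1 := coord j (fst B)) in *; set (b2 := coord j (snd B)) in *.
  assert (Hside : pass1 a1 a2 b1 b2 - pass2 a1 a2 b1 b2 = 1 \/
                  pass1 a1 a2 b1 b2 - pass2 a1 a2 b1 b2 = -1).
  { unfold pass1, pass2, pass_side; destruct (side_cases ((a1 - a2) + (b1 - b2))) as [-> | ->];
      [left | right]; field. }
  split; [|split].
  - exists j; unfold gap, j; simpl; rewrite Bool.negb_involutive.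
    rewrite psub_mkpt, !coord_psub, coord_mkpt, coord_negb_mkpt.
    split; [reflexivity | unfold pass_clear; lra].
  - exists i; unfold gap; simpl; rewrite !psub_mkpt, !coord_mkpt, !coord_negb_mkpt.
    split; [reflexivity | unfold pass_clear; lra].
  - exists j; unfold gap, j; simpl; rewrite Bool.negb_involutive.
    rewrite psub_mkpt, !coord_psub, coord_mkpt, coord_negb_mkpt.
    split; [reflexivity | unfold pass_clear; lra].
Qed.

Lemma cross_plan_lower_bound i A B : crosses i A B ->
  plan_lower_bound A (fst (cross_waypoints i A B)) (snd (cross_waypoints i A B)) B.
Proof.
  intros [Hi [HjA HjB]] t0 t1 m1 m2 c HF HC; unfold gap in *; repeat rewrite coord_psub in *.
  set (j := negb i) in *.
  destruct (schedule_aligned_somewhere i A B t0 t1 m1 m2 HF) as [t [Ht Hal]].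
  { unfold gap; rewrite !coord_psub; nra. }
  pose proof (schedule_cost_ge_via A B t0 t1 m1 m2 c t HF HC Ht) as Hc.
  assert (Hz : 1 <= Rabs (coord j (m1 t) - coord j (m2 t))).
  { destruct HF as [_ [_ [_ [_ [_ [_ HV]]]]]]; specialize (HV t Ht); unfold valid_config in HV.
    rewrite (ninf_coord i), !coord_psub in HV; simpl in HV; rewrite Hal, Rminus_diag, Rabs_R0 in HV.
    unfold Rmax in HV; destruct Rle_dec; pose proof (Rabs_pos (coord j (m1 t) - coord j (m2 t)));
      fold j in HV; lra. }
  pose proof (pass_cost_le _ _ _ _ _ _ HjA HjB Hz) as Hpass; simpl in Hpass.
  pose proof (Rabs_triang (coord i (m2 t) - coord i (fst A)) (coord i (fst B) - coord i (m2 t))).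
  pose proof (Rabs_triang (coord i (m2 t) - coord i (snd A)) (coord i (snd B) - coord i (m2 t))).
  revert Hc; unfold phase_len, cross_waypoints; simpl.
  rewrite !(n1_psub_coord i), !coord_mkpt, !coord_negb_mkpt, Hal; fold j.
  rewrite !Rminus_diag, !Rabs_R0.
  replace (coord i (m2 t) - coord i (fst A) + (coord i (fst B) - coord i (m2 t)))
    with (coord i (fst B) - coord i (fst A)) in * by ring.
  replace (coord i (m2 t) - coord i (snd A) + (coord i (snd B) - coord i (m2 t)))
    with (coord i (snd B) - coord i (snd A)) in * by ring.
  lra.
Qed.

Lemma cross_plan_optimal i A B : crosses i A B ->
  optimal_plan A (fst (cross_waypoints i A B)) (snd (cross_waypoints i A B)) B.
Proof. split; [apply cross_plan_clear | apply cross_plan_lower_bound]; assumption. Qed.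

Lemma plan_cases A B : valid_config A -> valid_config B ->
  ~ crosses true A B -> ~ crosses false A B -> ~ first_clear true A B -> first_clear false A B.
Proof.
  unfold valid_config; rewrite !ninf_ge1_cases.
  unfold crosses, first_clear, pass_clear; fold (gap A) (gap B); simpl.
  destruct (gap A) as [ax ay], (gap B) as [bx bY]; simpl; intros.
  destruct (Rle_lt_dec ax (-1)), (Rle_lt_dec 1 ax), (Rle_lt_dec ay (-1)), (Rle_lt_dec 1 ay),
    (Rle_lt_dec bx (-1)), (Rle_lt_dec 1 bx), (Rle_lt_dec bY (-1)), (Rle_lt_dec 1 bY);
    try lra; tauto.
Qed.

(** * Real-RAM expressions *)

Inductive cond : Type :=
| CLe (a b : rexp)
| CLt (a b : rexp)
| CAnd (c d : cond)
| COr (c d : cond).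

Fixpoint cond_holds (env : nat -> R) (c : cond) : Prop :=
  match c with
  | CLe a b => reval env a <= reval env b
  | CLt a b => reval env a < reval env b
  | CAnd c d => cond_holds env c /\ cond_holds env d
  | COr c d => cond_holds env c \/ cond_holds env d
  end.

Fixpoint rif (c : cond) (x y : rexp) : rexp :=
  match c with
  | CLe a b => RIfLe a b x y
  | CLt a b => RIfLe b a y x
  | CAnd c d => rif c (rif d x y) y
  | COr c d => rif c x (rif d x y)
  end.

Lemma reval_rif env c : forall x y,
  (cond_holds env c -> reval env (rif c x y) = reval env x) /\
  (~ cond_holds env c -> reval env (rif c x y) = reval env y).
Proof.
  induction c as [a b | a b | c IHc d IHd | c IHc d IHd]; intros x y; simpl.
  - destruct Rle_dec; split; intros; auto; contradiction.
  - destruct Rle_dec; split; intros; auto; lra.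
  - split; intros H.
    + rewrite (proj1 (IHc _ _)), (proj1 (IHd _ _)); tauto.
    + destruct (classic (cond_holds env c)) as [Hc|Hc].
      * rewrite (proj1 (IHc _ _) Hc); apply (proj2 (IHd _ _)); tauto.
      * apply (proj2 (IHc _ _) Hc).
  - split; intros H.
    + destruct (classic (cond_holds env c)) as [Hc|Hc].
      * apply (proj1 (IHc _ _) Hc).
      * rewrite (proj2 (IHc _ _) Hc); apply (proj1 (IHd _ _)); tauto.
    + rewrite (proj2 (IHc _ _)), (proj2 (IHd _ _)); tauto.
Qed.

Definition wif (c : cond) (w w' : wexp) : wexp :=
  match w, w' with
  | (a1, a2, a3, a4), (b1, b2, b3, b4) => (rif c a1 b1, rif c a2 b2, rif c a3 b3, rif c a4 b4)
  end.

Lemma weval_wif_true env c w w' : cond_holds env c -> weval env (wif c w w') = weval env w.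
Proof.
  destruct w as [[[? ?] ?] ?], w' as [[[? ?] ?] ?]; intros H; simpl.
  rewrite !(proj1 (reval_rif env c _ _) H); reflexivity.
Qed.

Lemma weval_wif_false env c w w' : ~ cond_holds env c -> weval env (wif c w w') = weval env w'.
Proof.
  destruct w as [[[? ?] ?] ?], w' as [[[? ?] ?] ?]; intros H; simpl.
  rewrite !(proj2 (reval_rif env c _ _) H); reflexivity.
Qed.

Definition eabs (e : rexp) : rexp := RIfLe (RConst 0) e e (RSub (RConst 0) e).
Definition emax (a b : rexp) : rexp := RIfLe a b b a.
Definition emin (a b : rexp) : rexp := RIfLe a b a b.

Lemma reval_eabs env e : reval env (eabs e) = Rabs (reval env e).
Proof. unfold eabs; simpl; destruct Rle_dec; split_Rabs; lra. Qed.

Definition einput (i : bool) (k : nat) : rexp := RVar (2 * k + if i then 0 else 1).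

Definition input_point (A B : config2) (k : nat) : pt :=
  match k with 0 => fst A | 1 => snd A | 2 => fst B | _ => snd B end.

Lemma reval_einput A B i k : (k < 4)%nat ->
  reval (input_env A B) (einput i k) = coord i (input_point A B k).
Proof. intros; destruct i, k as [|[|[|[|k]]]]; try reflexivity; lia. Qed.

Definition egap (i : bool) (k : nat) : rexp := RSub (einput i k) (einput i (S k)).

Lemma reval_egap_A A B i : reval (input_env A B) (egap i 0) = coord i (gap A).
Proof. unfold egap, gap; cbn [reval]; rewrite !reval_einput, coord_psub by lia; reflexivity. Qed.

Lemma reval_egap_B A B i : reval (input_env A B) (egap i 2) = coord i (gap B).
Proof. unfold egap, gap; cbn [reval]; rewrite !reval_einput, coord_psub by lia; reflexivity. Qed.

Definition epass_clear (c u v : rexp) : cond :=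
  COr (COr (CLe (RConst 1) c) (CLe c (RConst (-1))))
      (COr (CAnd (CLe u (RConst (-1))) (CLe v (RConst (-1))))
           (CAnd (CLe (RConst 1) u) (CLe (RConst 1) v))).

Lemma holds_epass_clear env c u v :
  cond_holds env (epass_clear c u v) <-> pass_clear (reval env c) (reval env u) (reval env v).
Proof. unfold epass_clear, pass_clear; simpl; tauto. Qed.

Definition ecrosses (i : bool) : cond :=
  CAnd (COr (CAnd (CLe (egap i 0) (RConst (-1))) (CLe (RConst 1) (egap i 2)))
            (CAnd (CLe (RConst 1) (egap i 0)) (CLe (egap i 2) (RConst (-1)))))
       (CAnd (CAnd (CLt (RConst (-1)) (egap (negb i) 0)) (CLt (egap (negb i) 0) (RConst 1)))
             (CAnd (CLt (RConst (-1)) (egap (negb i) 2)) (CLt (egap (negb i) 2) (RConst 1)))).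

Lemma holds_ecrosses A B i : cond_holds (input_env A B) (ecrosses i) <-> crosses i A B.
Proof. unfold ecrosses, crosses; cbn [cond_holds reval]; rewrite !reval_egap_A, !reval_egap_B; tauto. Qed.

Definition efirst_clear (i : bool) : cond :=
  CAnd (epass_clear (egap (negb i) 0) (egap i 0) (egap i 2))
       (epass_clear (egap i 2) (egap (negb i) 0) (egap (negb i) 2)).

Lemma holds_efirst_clear A B i : cond_holds (input_env A B) (efirst_clear i) <-> first_clear i A B.
Proof.
  unfold efirst_clear, first_clear; cbn [cond_holds]; rewrite !holds_epass_clear.
  rewrite !reval_egap_A, !reval_egap_B; tauto.
Qed.

Definition epass_side (a1 a2 b1 b2 : rexp) : rexp :=
  RIfLe (RConst 0) (RAdd (RSub a1 a2) (RSub b1 b2)) (RConst 1) (RConst (-1)).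

Definition epass_sum (a1 a2 b1 b2 : rexp) : rexp :=
  let u := eabs (RSub (epass_side a1 a2 b1 b2) (RSub a1 a2)) in
  RAdd (RAdd a1 a2) (emax (RSub (RConst 0) u) (emin (RSub (RAdd b1 b2) (RAdd a1 a2)) u)).

Definition epass1 (a1 a2 b1 b2 : rexp) : rexp :=
  RDiv (RAdd (epass_sum a1 a2 b1 b2) (epass_side a1 a2 b1 b2)) (RConst 2).
Definition epass2 (a1 a2 b1 b2 : rexp) : rexp :=
  RDiv (RSub (epass_sum a1 a2 b1 b2) (epass_side a1 a2 b1 b2)) (RConst 2).

Lemma reval_epass_sum env a1 a2 b1 b2 : reval env (epass_sum a1 a2 b1 b2) =
  pass_sum (reval env a1) (reval env a2) (reval env b1) (reval env b2).
Proof. unfold epass_sum, emax, emin; cbn [reval]; rewrite !reval_eabs, Rminus_0_l; reflexivity. Qed.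

Lemma reval_epass1 env a1 a2 b1 b2 : reval env (epass1 a1 a2 b1 b2) =
  pass1 (reval env a1) (reval env a2) (reval env b1) (reval env b2).
Proof. unfold epass1; cbn [reval]; rewrite reval_epass_sum; reflexivity. Qed.

Lemma reval_epass2 env a1 a2 b1 b2 : reval env (epass2 a1 a2 b1 b2) =
  pass2 (reval env a1) (reval env a2) (reval env b1) (reval env b2).
Proof. unfold epass2; cbn [reval]; rewrite reval_epass_sum; reflexivity. Qed.

Definition emkpt (i : bool) (a b : rexp) : rexp * rexp := if i then (a, b) else (b, a).
Definition econfig (p q : rexp * rexp) : wexp := (fst p, snd p, fst q, snd q).

Lemma weval_econfig env i a b i' a' b' :
  weval env (econfig (emkpt i a b) (emkpt i' a' b')) =
  (mkpt i (reval env a) (reval env b), mkpt i' (reval env a') (reval env b')).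
Proof. destruct i, i'; reflexivity. Qed.

Definition einput_config (k : nat) : wexp :=
  econfig (emkpt true (einput true k) (einput false k))
          (emkpt true (einput true (S k)) (einput false (S k))).

Lemma weval_einput_config_A A B : weval (input_env A B) (einput_config 0) = A.
Proof. destruct A as [[] []]; reflexivity. Qed.

Lemma weval_einput_config_B A B : weval (input_env A B) (einput_config 2) = B.
Proof. destruct B as [[] []]; reflexivity. Qed.

Definition efirst_waypoint (i : bool) : wexp :=
  econfig (emkpt i (einput i 2) (einput (negb i) 0)) (emkpt i (einput i 3) (einput (negb i) 1)).

Lemma weval_efirst_waypoint A B i :
  weval (input_env A B) (efirst_waypoint i) = first_waypoint i A B.
Proof. unfold efirst_waypoint; rewrite weval_econfig, !reval_einput by lia; reflexivity. Qed.

Definition ecross_waypoint (i : bool) (k : nat) : wexp :=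
  let j := negb i in
  let z1 := epass1 (einput j 0) (einput j 1) (einput j 2) (einput j 3) in
  let z2 := epass2 (einput j 0) (einput j 1) (einput j 2) (einput j 3) in
  econfig (emkpt i (einput i k) z1) (emkpt i (einput i (S k)) z2).

Lemma weval_ecross_waypoint_1 A B i :
  weval (input_env A B) (ecross_waypoint i 0) = fst (cross_waypoints i A B).
Proof.
  unfold ecross_waypoint; rewrite weval_econfig, reval_epass1, reval_epass2, !reval_einput by lia.
  reflexivity.
Qed.

Lemma weval_ecross_waypoint_2 A B i :
  weval (input_env A B) (ecross_waypoint i 2) = snd (cross_waypoints i A B).
Proof.
  unfold ecross_waypoint; rewrite weval_econfig, reval_epass1, reval_epass2, !reval_einput by lia.
  reflexivity.
Qed.

Definition eselect (w1 w2 w3 w4 : wexp) : wexp :=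
  wif (ecrosses true) w1 (wif (ecrosses false) w2 (wif (efirst_clear true) w3 w4)).

Definition ew1 : wexp :=
  eselect (ecross_waypoint true 0) (ecross_waypoint false 0) (efirst_waypoint true)
    (efirst_waypoint false).

Definition ew2 : wexp :=
  eselect (ecross_waypoint true 2) (ecross_waypoint false 2) (einput_config 2) (einput_config 2).

Definition ew (k : nat) : wexp :=
  match k with 0 => einput_config 0 | 1 => ew1 | 2 => ew2 | _ => einput_config 2 end.

Definition ephase_len (w w' : wexp) : rexp :=
  match w, w' with
  | (a1, a2, a3, a4), (b1, b2, b3, b4) =>
    RAdd (RAdd (eabs (RSub b1 a1)) (eabs (RSub b2 a2))) (RAdd (eabs (RSub b3 a3)) (eabs (RSub b4 a4)))
  end.

Lemma reval_ephase_len env w w' : reval env (ephase_len w w') = phase_len (weval env w) (weval env w').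
Proof.
  destruct w as [[[a1 a2] a3] a4], w' as [[[b1 b2] b3] b4].
  unfold ephase_len, phase_len, n1, psub; cbn [reval weval fst snd].
  rewrite !reval_eabs; reflexivity.
Qed.

Fixpoint etau (k : nat) : rexp :=
  match k with
  | 0 => RConst 0
  | S k' => RAdd (etau k') (ephase_len (ew k') (ew k))
  end.

Lemma reval_etau_S env k : reval env (etau (S k)) =
  reval env (etau k) + phase_len (weval env (ew k)) (weval env (ew (S k))).
Proof. rewrite <- reval_ephase_len; reflexivity. Qed.

Lemma weval_ew_0 A B : weval (input_env A B) (ew 0) = A.
Proof. exact (weval_einput_config_A A B). Qed.

Lemma weval_ew_3 A B : weval (input_env A B) (ew 3) = B.
Proof. exact (weval_einput_config_B A B). Qed.

Lemma reval_etau_3 A B : reval (input_env A B) (etau 3) =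
  phase_len A (weval (input_env A B) ew1) +
  phase_len (weval (input_env A B) ew1) (weval (input_env A B) ew2) +
  phase_len (weval (input_env A B) ew2) B.
Proof.
  rewrite !reval_etau_S, weval_ew_0, weval_ew_3; cbn [ew].
  change (reval _ (etau 0)) with 0; ring.
Qed.

Lemma selected_plan_optimal A B : valid_config A -> valid_config B ->
  optimal_plan A (weval (input_env A B) ew1) (weval (input_env A B) ew2) B.
Proof.
  intros HA HB; unfold ew1, ew2, eselect.
  destruct (classic (crosses true A B)) as [HT|HT].
  { rewrite !(weval_wif_true _ (ecrosses true)) by (apply holds_ecrosses; exact HT).
    rewrite weval_ecross_waypoint_1, weval_ecross_waypoint_2; apply cross_plan_optimal, HT. }
  rewrite !(weval_wif_false _ (ecrosses true)) by (rewrite holds_ecrosses; exact HT).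
  destruct (classic (crosses false A B)) as [HF|HF].
  { rewrite !(weval_wif_true _ (ecrosses false)) by (apply holds_ecrosses; exact HF).
    rewrite weval_ecross_waypoint_1, weval_ecross_waypoint_2; apply cross_plan_optimal, HF. }
  rewrite !(weval_wif_false _ (ecrosses false)) by (rewrite holds_ecrosses; exact HF).
  destruct (classic (first_clear true A B)) as [HX|HX].
  - rewrite !(weval_wif_true _ (efirst_clear true)) by (apply holds_efirst_clear; exact HX).
    rewrite weval_efirst_waypoint, weval_einput_config_B; apply first_plan_optimal; auto.
  - rewrite !(weval_wif_false _ (efirst_clear true)) by (rewrite holds_efirst_clear; exact HX).
    rewrite weval_efirst_waypoint, weval_einput_config_B; apply first_plan_optimal; auto.
    apply plan_cases; auto.
Qed.

Theorem theorem3p5 :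
  exists (N : nat) (v : rexp) (tau : nat -> rexp) (w : nat -> wexp),
    forall A B : config2, valid_config A -> valid_config B ->
      is_min_sum_value A B (reval (input_env A B) v) /\
      exists m1 m2 : R -> pt,
        realizes N (fun k => reval (input_env A B) (tau k))
                   (fun k => weval (input_env A B) (w k)) m1 m2 /\
        feasible_schedule A B (reval (input_env A B) (tau 0%nat))
                              (reval (input_env A B) (tau N)) m1 m2 /\
        schedule_cost m1 m2 (reval (input_env A B) (tau 0%nat))
                            (reval (input_env A B) (tau N))
                            (reval (input_env A B) v).
Proof.
  exists 3%nat, (etau 3), etau, ew; intros A B HA HB.
  destruct (selected_plan_optimal A B HA HB) as [[C0 [C1 C2]] LB].
  destruct (waypoint_schedule3 (fun k => reval (input_env A B) (etau k))
              (fun k => weval (input_env A B) (ew k))) as [m1 [m2 [HR [HF HC]]]].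
  - reflexivity.
  - intros k _; apply reval_etau_S.
  - intros [|[|[|k]]] Hk; [rewrite weval_ew_0; exact C0 | exact C1 | rewrite weval_ew_3; exact C2 | lia].
  - cbv beta in HF, HC; rewrite weval_ew_0, weval_ew_3 in HF.
    split; [split|].
    + exists (reval (input_env A B) (etau 0)), (reval (input_env A B) (etau 3)), m1, m2; auto.
    + intros t0 t1 m1' m2' c HF' HC'; rewrite reval_etau_3; exact (LB t0 t1 m1' m2' c HF' HC').
    + exists m1, m2; auto.
Qed.
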